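(* Let $N,M,L,I$ be positive integers, $\sigma^2>0$, $\rho>0$. For $i\in\{1,\dots,I\}$ let $\hat\alpha_i\in\mathbb C$, $\hat{\mathbf G}_i\in\mathbb C^{N\times M}$, $\mathbf a_i\in\mathbb C^N$; for $1\le i<j\le I$ let $\beta_{i,j}\ge0$; and let $\mathbf x\in\mathbb C^M$, $\boldsymbol\theta\in\mathbb C^N$ be fixed. For $i,j\in\{1,\dots,I\}$ define $\mathbf A_{i,j}=(\hat{\mathbf G}_j^{*}\hat{\mathbf G}_i^{T})\odot(\mathbf a_i\mathbf a_j^H)^T$ and $\mathbf B_{i,j}=(\mathbf a_j^{*}\mathbf a_i^T)\odot(\hat{\mathbf G}_i\mathbf x\mathbf x^H\hat{\mathbf G}_j^H)^T$. For $\mathbf Q\in\mathbb C^{N\times N}$ let $$\varphi_{i,j}(\mathbf Q)=\frac{L}{\sigma^2}\Big(|\hat\alpha_i|^2\mathrm{tr}(\mathbf Q^H\mathbf A_{i,i}\mathbf Q\mathbf B_{i,i})-2\Re\{\hat\alpha_i\hat\alpha_j^{*}\mathrm{tr}(\mathbf Q^H\mathbf A_{i,j}\mathbf Q\mathbf B_{i,j})\}+|\hat\alpha_j|^2\mathrm{tr}(\mathbf Q^H\mathbf A_{j,j}\mathbf Q\mathbf B_{j,j})\Big),$$ $$\varpi(\mathbf Q)=\sum_{i=1}^{I}\sum_{j=i+1}^{I}\beta_{i,j}\varphi_{i,j}(\mathbf Q)+\frac{1}{2\rho}\Re\{\boldsymbol\theta^H\mathbf Q\boldsymbol\theta\},$$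 and let $\mathcal M=\{\mathbf Q\in\mathbb C^{N\times N}:|\mathbf Q(m,n)|=1\ \forall m,n\}$. Further define $$\mathbf D_{i,j}(\mathbf Q)=\frac{L}{\sigma^2}\Big(|\hat\alpha_i|^2\mathbf A_{i,i}\mathbf Q\mathbf B_{i,i}-\hat\alpha_i\hat\alpha_j^{*}\mathbf A_{i,j}\mathbf Q\mathbf B_{i,j}-\hat\alpha_i^{*}\hat\alpha_j\mathbf A_{i,j}^H\mathbf Q\mathbf B_{i,j}^H+|\hat\alpha_j|^2\mathbf A_{j,j}\mathbf Q\mathbf B_{j,j}\Big)$$ and, for $m,n\in\{1,\dots,N\}$, $$\chi_{i,j}^{(m,n)}=|\hat\alpha_i|^2\mathbf A_{i,i}(m,m)\mathbf B_{i,i}(n,n)-2\Re\{\hat\alpha_i\hat\alpha_j^{*}\mathbf A_{i,j}(m,m)\mathbf B_{i,j}(n,n)\}+|\hat\alpha_j|^2\mathbf A_{j,j}(m,m)\mathbf B_{j,j}(n,n).$$ Then, when the block coordinate descent method is applied to $\max_{\mathbf Q\in\mathcal M}\varpi(\mathbf Q)$ updating one entry at a time, the entry $(m,n)$ (for any $m,n$, with all other entries of $\mathbf Q\in\mathcal M$ fixed) is updated as $$\mathbf Q(m,n)\leftarrow\exp\Big\{j\arg\Big(\sum_{i<j}\beta_{i,j}[\mathbf D_{i,j}(\mathbf Q)]_{m,n}+\frac{1}{4\rho}[\boldsymbol\theta\boldsymbol\theta^H]_{m,n}-\frac{L}{\sigma^2}\mathbf Q(m,n)\sum_{i<j}\beta_{i,j}\chi_{i,j}^{(m,n)}\Big)\Big\},$$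 i.e. this value maximizes $\varpi$ over all matrices in $\mathcal M$ that coincide with $\mathbf Q$ outside the entry $(m,n)$ (with $\arg 0$ taken arbitrarily).
   Context: $\odot$ is the Hadamard product, $(\cdot)^*$ entrywise conjugate, $(\cdot)^H$ conjugate transpose, $j$ the imaginary unit (also used as an index), $\arg$ the argument of a complex number, $\sum_{i<j}$ denotes $\sum_{i=1}^I\sum_{j=i+1}^I$. $\mathbf D_{i,j}(\mathbf Q)$ is the Wirtinger derivative $\partial\varphi_{i,j}/\partial\mathbf Q^{*}$. *)

From HB Require Import structures.
From mathcomp Require Import all_boot all_order all_algebra.
From mathcomp Require Import complex.
From mathcomp Require Import reals trigo.
Set Implicit Arguments. Unset Strict Implicit. Unset Printing Implicit Defensive.
Import Order.TTheory GRing.Theory Num.Theory.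
Local Open Scope ring_scope.
Local Open Scope complex_scope.

Section Defs.
Variable R : realType.
Local Notation C := R[i].

Definition conjm m n (A : 'M[C]_(m, n)) : 'M[C]_(m, n) := map_mx (fun z => z^*) A.
Definition hermt m n (A : 'M[C]_(m, n)) : 'M[C]_(n, m) := (conjm A)^T.
Definition hadamard m n (A B : 'M[C]_(m, n)) : 'M[C]_(m, n) :=
  \matrix_(p, q) (A p q * B p q).

Definition expj (t : R) : C := cos t +i* sin t.

Variables (N M I : nat).

Definition Amat (G : 'I_I -> 'M[C]_(N, M)) (a : 'I_I -> 'cV[C]_N) (i j : 'I_I)
  : 'M[C]_N :=
  hadamard (conjm (G j) *m (G i)^T) ((a i *m hermt (a j))^T).

Definition Bmat (G : 'I_I -> 'M[C]_(N, M)) (a : 'I_I -> 'cV[C]_N) (x : 'cV[C]_M)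
  (i j : 'I_I) : 'M[C]_N :=
  hadamard (conjm (a j) *m (a i)^T) ((G i *m x *m hermt x *m hermt (G j))^T).

Variables (L : nat) (sigma2 rho : R) (alpha : 'I_I -> C)
  (G : 'I_I -> 'M[C]_(N, M)) (a : 'I_I -> 'cV[C]_N)
  (beta : 'I_I -> 'I_I -> R) (x : 'cV[C]_M) (theta : 'cV[C]_N).

Local Notation A := (Amat G a).
Local Notation B := (Bmat G a x).
Local Notation c := ((L%:R : C) / sigma2%:C).

Definition phi (i j : 'I_I) (Q : 'M[C]_N) : C :=
  c * (`|alpha i| ^+ 2 * \tr (hermt Q *m A i i *m Q *m B i i)
       - 2 * 'Re (alpha i * (alpha j)^* * \tr (hermt Q *m A i j *m Q *m B i j))
       + `|alpha j| ^+ 2 * \tr (hermt Q *m A j j *m Q *m B j j)).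

Definition varpi (Q : 'M[C]_N) : C :=
  \sum_(i < I) \sum_(j < I | (i < j)%N) (beta i j)%:C * phi i j Q
  + (2 * rho)^-1%:C * 'Re (\tr (hermt theta *m Q *m theta)).

Definition unimod (Q : 'M[C]_N) : Prop := forall p q, `|Q p q| = 1.

Definition Dmat (i j : 'I_I) (Q : 'M[C]_N) : 'M[C]_N :=
  c *: (`|alpha i| ^+ 2 *: (A i i *m Q *m B i i)
        - (alpha i * (alpha j)^*) *: (A i j *m Q *m B i j)
        - ((alpha i)^* * alpha j) *: (hermt (A i j) *m Q *m hermt (B i j))
        + `|alpha j| ^+ 2 *: (A j j *m Q *m B j j)).

Definition chi (i j : 'I_I) (m n : 'I_N) : C :=
  `|alpha i| ^+ 2 * A i i m m * B i i n n
  - 2 * 'Re (alpha i * (alpha j)^* * A i j m m * B i j n n)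
  + `|alpha j| ^+ 2 * A j j m m * B j j n n.

Definition bcd_arg (Q : 'M[C]_N) (m n : 'I_N) : C :=
  \sum_(i < I) \sum_(j < I | (i < j)%N) (beta i j)%:C * Dmat i j Q m n
  + (4 * rho)^-1%:C * (theta *m hermt theta) m n
  - c * Q m n * \sum_(i < I) \sum_(j < I | (i < j)%N) (beta i j)%:C * chi i j m n.

End Defs.

Definition upd_entry (T : Type) N (Q : 'M[T]_N) (m n : 'I_N) (v : T) : 'M[T]_N :=
  \matrix_(p, q) (if (p == m) && (q == n) then v else Q p q).

From HB Require Import structures.
From mathcomp Require Import all_boot all_order all_algebra.
From mathcomp Require Import complex.
From mathcomp Require Import reals trigo.
From mathcomp Require Import ring.
Set Implicit Arguments. Unset Strict Implicit. Unset Printing Implicit Defensive.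
Import Order.TTheory GRing.Theory Num.Theory.
Local Open Scope ring_scope.

(* Fix every entry of [Q] but [Q(m,n)] and write [Q = Q0 + q E_mn] with
   [Q0(m,n) = 0] and [|q| = 1].  A trace form [tr (Q^H K Q P)] then equals its
   value at [Q0] plus [q^* (K Q0 P)(m,n) + q ((K^H Q0 P^H)(m,n))^*] plus
   [|q|^2 K(m,m) P(n,n)], where [|q|^2 = 1].  As [A_ii] and [B_ii] are Hermitian,
   the linear terms of [phi_ij] combine into [2 Re (q^* D_ij(Q0)(m,n))], whence
   [varpi Q = k + 2 Re (q^* b)] with [k] and [b] depending on [Q0] only.
   This [b] is the argument of the update, whose [chi] term removes from
   [D_ij(Q)] the contribution of the current entry [Q(m,n)]; and
   [Re (q^* b) <= |b|], with equality at the phase of [b]. *)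

Section NumConj.
Variable C : numClosedFieldType.
Implicit Types u v : C.

(* Stated for [Num.conj] itself: rewriting with [rmorphD] and friends leaves a
   canonical-structure application that [conjCK] etc. no longer match. *)
Lemma conjCD u v : (u + v)^* = u^* + v^*. Proof. exact: rmorphD. Qed.
Lemma conjCN u : (- u)^* = - u^*. Proof. exact: rmorphN. Qed.
Lemma conjCM u v : (u * v)^* = u^* * v^*. Proof. exact: rmorphM. Qed.
Lemma conjCV u : (u^-1)^* = (u^*)^-1. Proof. exact: fmorphV. Qed.

Lemma conjC_sum (J : Type) (r : seq J) (P : pred J) (F : J -> C) :
  (\sum_(k <- r | P k) F k)^* = \sum_(k <- r | P k) (F k)^*.
Proof. exact: rmorph_sum. Qed.

Lemma mul2Re u : 2 * 'Re u = u + u^*.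
Proof. by rewrite ReE mulrC divfK ?pnatr_eq0. Qed.

Lemma Re_conjM_le_phase (b e q : C) : `|e| = 1 -> b = `|b| * e -> `|q| = 1 ->
  'Re (q^* * b) <= 'Re (e^* * b).
Proof.
move=> unit_e def_b unit_q.
have -> : e^* * b = `|b| by rewrite {1}def_b mulrCA -normCKC unit_e expr1n mulr1.
have /Creal_ReP -> := normr_real b.
have <- : `|q^* * b| = `|b| by rewrite normrM norm_conjC unit_q mul1r.
by case: (leif_Re_Creal (q^* * b)).
Qed.

End NumConj.

Lemma conjC_real (R : realType) (s : R) : ((s%:C)%C)^* = (s%:C)%C :> R[i].
Proof. exact: conjc_real. Qed.

Lemma norm_expj (R : realType) (t : R) : `|expj t| = 1.
Proof. by rewrite normc_def /= cos2Dsin2 sqrtr1. Qed.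

Section ConjugateTranspose.
Variable R : realType.
Local Notation C := R[i].
Implicit Types p r s : nat.

Lemma hermtE p r (X : 'M[C]_(p, r)) i j : hermt X i j = (X j i)^*.
Proof. by rewrite !mxE. Qed.

Lemma hermtK p r (X : 'M[C]_(p, r)) : hermt (hermt X) = X.
Proof. by apply/matrixP => i j; rewrite !hermtE conjCK. Qed.

Lemma hermtD p r (X Y : 'M[C]_(p, r)) : hermt (X + Y) = hermt X + hermt Y.
Proof. by apply/matrixP => i j; rewrite !mxE rmorphD. Qed.

Lemma hermtZ p r (c : C) (X : 'M[C]_(p, r)) : hermt (c *: X) = c^* *: hermt X.
Proof. by apply/matrixP => i j; rewrite !mxE rmorphM. Qed.

Lemma hermt_mul p r s (X : 'M[C]_(p, r)) (Y : 'M[C]_(r, s)) :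
  hermt (X *m Y) = hermt Y *m hermt X.
Proof.
apply/matrixP => i j; rewrite hermtE !mxE conjC_sum; apply: eq_bigr => k _.
by rewrite !hermtE conjCM mulrC.
Qed.

Lemma hermt_delta p (i j : 'I_p) : hermt (delta_mx i j : 'M[C]_p) = delta_mx j i.
Proof.
apply/matrixP => k l; rewrite hermtE !mxE andbC.
by case: (_ && _); rewrite ?conjC1 ?conjC0.
Qed.

Lemma hermt_trmx p r (X : 'M[C]_(p, r)) : hermt X^T = conjm X.
Proof. by apply/matrixP => i j; rewrite !mxE. Qed.

Lemma hermt_conjm p r (X : 'M[C]_(p, r)) : hermt (conjm X) = X^T.
Proof. by apply/matrixP => i j; rewrite !hermtE !mxE conjCK. Qed.

Lemma hermt_hadamard p r (X Y : 'M[C]_(p, r)) :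
  hermt (hadamard X Y) = hadamard (hermt X) (hermt Y).
Proof. by apply/matrixP => i j; rewrite !mxE rmorphM. Qed.

Lemma hermitian_trmx p (Y : 'M[C]_p) : hermt Y = Y -> hermt Y^T = Y^T.
Proof.
move=> hY; rewrite -[in RHS]hY hermt_trmx.
by apply/matrixP => i j; rewrite !mxE.
Qed.

End ConjugateTranspose.

Section EntryUpdate.
Variables (T : pzRingType) (p : nat) (m n : 'I_p).
Implicit Types Q : 'M[T]_p.

Lemma upd_entryE Q v : upd_entry Q m n v = upd_entry Q m n 0 + v *: delta_mx m n.
Proof.
apply/matrixP => k l; rewrite !mxE.
by case: (_ && _); rewrite ?mulr1 ?mulr0 ?add0r ?addr0.
Qed.

Lemma eq_upd_entry Q Q' :
  (forall k l, (k != m) || (l != n) -> Q' k l = Q k l) ->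
  Q' = upd_entry Q m n (Q' m n).
Proof.
move=> agree; apply/matrixP => k l; rewrite mxE.
case: (boolP ((k == m) && (l == n))) => [/andP[/eqP-> /eqP->] // | hkl].
by rewrite agree // -negb_and.
Qed.

Lemma upd_entry_id Q : upd_entry Q m n (Q m n) = Q.
Proof. exact/esym/eq_upd_entry. Qed.

End EntryUpdate.

Lemma unimod_upd_entry (R : realType) N (Q : 'M[R[i]]_N) m n v :
  unimod Q -> `|v| = 1 -> unimod (upd_entry Q m n v).
Proof. by move=> hQ hv k l; rewrite mxE; case: ifP. Qed.

Section SingleEntryPerturbation.
Variables (R : realType) (p : nat) (m n : 'I_p) (Q : 'M[R[i]]_p).
Local Notation C := R[i].
Local Notation Q0 := (upd_entry Q m n 0).

Lemma mxtrace_delta_mul (i j : 'I_p) (Z : 'M[C]_p) :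
  \tr (delta_mx i j *m Z) = Z j i.
Proof.
rewrite /mxtrace (bigD1 i) //= big1 ?addr0.
  rewrite mxE (bigD1 j) //= big1 ?addr0; first by rewrite mxE !eqxx mul1r.
  by move=> l hl; rewrite mxE (negbTE hl) andbF mul0r.
by move=> k hk; rewrite mxE big1 // => l _; rewrite mxE (negbTE hk) mul0r.
Qed.

Lemma mulmx_delta_entry (i j : 'I_p) (K P : 'M[C]_p) k l :
  (K *m delta_mx i j *m P) k l = K k i * P j l.
Proof.
rewrite -(mul_delta_mx (0 : 'I_1)).
by rewrite mulmxA -colE -mulmxA -rowE mxE big_ord1 !mxE.
Qed.

Lemma mulmx_upd_entry_entry (K P : 'M[C]_p) (q : C) :
  (K *m upd_entry Q m n q *m P) m n = (K *m Q0 *m P) m n + q * (K m m * P n n).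
Proof.
rewrite (upd_entryE _ _ _ q) mulmxDr mulmxDl -scalemxAr -scalemxAl.
by rewrite [LHS]mxE [in X in _ + X]mxE mulmx_delta_entry.
Qed.

Lemma mxtrace_quad_upd_entry (K P : 'M[C]_p) (q : C) :
  \tr (hermt (upd_entry Q m n q) *m K *m upd_entry Q m n q *m P) =
  \tr (hermt Q0 *m K *m Q0 *m P) + q^* * (K *m Q0 *m P) m n
  + q * ((hermt K *m Q0 *m hermt P) m n)^* + q * q^* * (K m m * P n n).
Proof.
rewrite (upd_entryE _ _ _ q); set Q1 := upd_entry Q m n 0.
rewrite hermtD hermtZ hermt_delta.
rewrite !(mulmxDl, mulmxDr) !mxtraceD -!(scalemxAl, scalemxAr) !mxtraceZ.
have -> : \tr (delta_mx n m *m K *m Q1 *m P) = (K *m Q1 *m P) m n.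
  by rewrite -!mulmxA mxtrace_delta_mul.
have -> : \tr (hermt Q1 *m K *m delta_mx m n *m P)
          = ((hermt K *m Q1 *m hermt P) m n)^*.
  rewrite mxtrace_mulC mulmxA mxtrace_mulC mxtrace_delta_mul.
  by rewrite -hermtE !hermt_mul !hermtK.
have -> : \tr (delta_mx n m *m K *m delta_mx m n *m P) = K m m * P n n.
  by rewrite -!mulmxA mxtrace_delta_mul mulmxA mulmx_delta_entry.
ring.
Qed.

Lemma mxtrace_form_upd_entry (u : 'cV[C]_p) (q : C) :
  \tr (hermt u *m upd_entry Q m n q *m u)
  = \tr (hermt u *m Q0 *m u) + q * ((u *m hermt u) m n)^*.
Proof.
rewrite (upd_entryE _ _ _ q) mulmxDr mulmxDl mxtraceD.
rewrite -scalemxAr -scalemxAl mxtraceZ.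
have -> : \tr (hermt u *m delta_mx m n *m u) = (u *m hermt u) n m.
  by rewrite mxtrace_mulC mulmxA mxtrace_mulC mxtrace_delta_mul.
by rewrite -hermtE hermt_mul hermtK.
Qed.

End SingleEntryPerturbation.

Section BlockCoordinateUpdate.
Variables (R : realType) (N M I L : nat) (sigma2 rho : R) (alpha : 'I_I -> R[i])
  (G : 'I_I -> 'M[R[i]]_(N, M)) (a : 'I_I -> 'cV[R[i]]_N)
  (beta : 'I_I -> 'I_I -> R) (x : 'cV[R[i]]_M) (theta : 'cV[R[i]]_N).
Local Notation C := R[i].
Local Notation A := (Amat G a).
Local Notation B := (Bmat G a x).
Local Notation c := ((L%:R : C) / (sigma2%:C)%C).
Local Notation phi := (phi L sigma2 alpha G a x).
Local Notation Dmat := (Dmat L sigma2 alpha G a x).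
Local Notation chi := (chi alpha G a x).
Local Notation varpi := (varpi L sigma2 rho alpha G a beta x theta).
Local Notation bcd_arg := (bcd_arg L sigma2 rho alpha G a beta x theta).

Lemma hermt_Amat_diag (i : 'I_I) : hermt (A i i) = A i i.
Proof.
rewrite /Amat hermt_hadamard hermt_mul hermt_trmx hermt_conjm.
by rewrite hermitian_trmx // hermt_mul hermtK.
Qed.

Lemma hermt_Bmat_diag (i : 'I_I) : hermt (B i i) = B i i.
Proof.
rewrite /Bmat hermt_hadamard hermt_mul hermt_trmx hermt_conjm.
by rewrite hermitian_trmx // !hermt_mul !hermtK !mulmxA.
Qed.

(* Comparing two distinct [Amat]/[Bmat] terms, or two distinct matrices, by
   conversion is very slow.  Hence the unfolding lemmas below (stated with the
   instances of this file), the abstraction of [Amat G a] and [Bmat G a x]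
   before rewriting, and the occurrence-restricted rewrites. *)
Lemma phiE (i j : 'I_I) (Q : 'M[C]_N) : phi i j Q =
  c * (`|alpha i| ^+ 2 * \tr (hermt Q *m A i i *m Q *m B i i)
       - 2 * 'Re (alpha i * (alpha j)^* * \tr (hermt Q *m A i j *m Q *m B i j))
       + `|alpha j| ^+ 2 * \tr (hermt Q *m A j j *m Q *m B j j)).
Proof. by []. Qed.

Variables (m n : 'I_N).

Lemma chiE (i j : 'I_I) : chi i j m n =
  `|alpha i| ^+ 2 * A i i m m * B i i n n
  - 2 * 'Re (alpha i * (alpha j)^* * A i j m m * B i j n n)
  + `|alpha j| ^+ 2 * A j j m m * B j j n n.
Proof. by []. Qed.

Lemma Dmat_entry (i j : 'I_I) (Q : 'M[C]_N) : Dmat i j Q m n =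
  c * (`|alpha i| ^+ 2 * (A i i *m Q *m B i i) m n
       - alpha i * (alpha j)^* * (A i j *m Q *m B i j) m n
       - (alpha i)^* * alpha j * (hermt (A i j) *m Q *m hermt (B i j)) m n
       + `|alpha j| ^+ 2 * (A j j *m Q *m B j j) m n).
Proof.
rewrite /Dmat; move: (Amat G a) (Bmat G a x) => AA BB.
move: (AA i i *m _ *m _) (AA i j *m _ *m _)
      (hermt (AA i j) *m _ *m _) (AA j j *m _ *m _).
by move=> P1 P2 P3 P4; rewrite !mxE.
Qed.

Section FixedMatrix.
Variable Q : 'M[C]_N.
Local Notation Q0 := (upd_entry Q m n 0).

Lemma phi_upd_entry (i j : 'I_I) (q : C) : `|q| = 1 ->
  phi i j (upd_entry Q m n q)
  = phi i j Q0 + c * chi i j m n + 2 * 'Re (q^* * Dmat i j Q0 m n).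
Proof.
move=> unit_q; have unit_q2 : q * q^* = 1 by rewrite -normCK unit_q expr1n.
have tr_ii := mxtrace_quad_upd_entry m n Q (A i i) (B i i) q.
have tr_ij := mxtrace_quad_upd_entry m n Q (A i j) (B i j) q.
have tr_jj := mxtrace_quad_upd_entry m n Q (A j j) (B j j) q.
rewrite Dmat_entry !phiE chiE.
move: tr_ii tr_ij tr_jj hermt_Amat_diag hermt_Bmat_diag.
move: (Amat G a) (Bmat G a x) => AA BB -> -> -> hermt_AA hermt_BB.
rewrite unit_q2 !mul1r !hermt_AA !hermt_BB !mul2Re !normCK.
rewrite !(conjCD, conjCN, conjCM, conjCK, conjC_nat, conjCV, conjC_real).
ring.
Qed.

Lemma Dmat_upd_entry (i j : 'I_I) (q : C) :
  Dmat i j (upd_entry Q m n q) m n = Dmat i j Q0 m n + c * q * chi i j m n.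
Proof.
have e_ii := mulmx_upd_entry_entry m n Q (A i i) (B i i) q.
have e_ij := mulmx_upd_entry_entry m n Q (A i j) (B i j) q.
have e_ji := mulmx_upd_entry_entry m n Q (hermt (A i j)) (hermt (B i j)) q.
have e_jj := mulmx_upd_entry_entry m n Q (A j j) (B j j) q.
rewrite [LHS]Dmat_entry [in RHS]Dmat_entry chiE.
move: e_ii e_ij e_ji e_jj; move: (Amat G a) (Bmat G a x) => AA BB -> -> -> ->.
rewrite !hermtE !mul2Re !normCK !(conjCD, conjCM, conjCK).
ring.
Qed.

End FixedMatrix.

Definition varpi_offset (Q0 : 'M[C]_N) : C :=
  \sum_(i < I) \sum_(j < I | (i < j)%N)
    (beta i j)%:C%C * (phi i j Q0 + c * chi i j m n)
  + ((2 * rho)^-1)%:C%C * 'Re (\tr (hermt theta *m Q0 *m theta)).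

Definition varpi_coef (Q0 : 'M[C]_N) : C :=
  \sum_(i < I) \sum_(j < I | (i < j)%N) (beta i j)%:C%C * Dmat i j Q0 m n
  + ((4 * rho)^-1)%:C%C * (theta *m hermt theta) m n.

Lemma varpiE (Q : 'M[C]_N) : varpi Q =
  \sum_(i < I) \sum_(j < I | (i < j)%N) (beta i j)%:C%C * phi i j Q
  + ((2 * rho)^-1)%:C%C * 'Re (\tr (hermt theta *m Q *m theta)).
Proof. by []. Qed.

Lemma bcd_argE (Q : 'M[C]_N) : bcd_arg Q m n =
  \sum_(i < I) \sum_(j < I | (i < j)%N) (beta i j)%:C%C * Dmat i j Q m n
  + ((4 * rho)^-1)%:C%C * (theta *m hermt theta) m n
  - c * Q m n * \sum_(i < I) \sum_(j < I | (i < j)%N) (beta i j)%:C%C * chi i j m n.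
Proof. by []. Qed.

Lemma varpi_upd_entry (Q : 'M[C]_N) (q : C) : `|q| = 1 ->
  varpi (upd_entry Q m n q)
  = varpi_offset (upd_entry Q m n 0)
    + 2 * 'Re (q^* * varpi_coef (upd_entry Q m n 0)).
Proof.
move=> unit_q; set Q0 := upd_entry Q m n 0.
have split_pair i j : (beta i j)%:C%C * phi i j (upd_entry Q m n q)
    = (beta i j)%:C%C * (phi i j Q0 + c * chi i j m n)
      + 2 * 'Re (q^* * ((beta i j)%:C%C * Dmat i j Q0 m n)).
  by rewrite phi_upd_entry // !mul2Re !(conjCM, conjCK, conjC_real); ring.
have split_theta :
    ((2 * rho)^-1)%:C%C * 'Re (\tr (hermt theta *m upd_entry Q m n q *m theta))
    = ((2 * rho)^-1)%:C%C * 'Re (\tr (hermt theta *m Q0 *m theta))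
      + 2 * 'Re (q^* * (((4 * rho)^-1)%:C%C * (theta *m hermt theta) m n)).
  have weight : ((2 * rho)^-1)%:C%C = ((4 * rho)^-1)%:C%C * 2 :> C.
    have -> : (2 * rho)^-1 = (4 * rho)^-1 * 2.
      have -> : 4 * rho = 2 * (2 * rho) by rewrite mulrA -natrM.
      by rewrite [in RHS]invfM mulrAC mulVf ?mul1r ?pnatr_eq0.
    by rewrite rmorphM rmorph_nat.
  rewrite mxtrace_form_upd_entry weight -!mulrA !mul2Re.
  by rewrite !(conjCD, conjCM, conjCK, conjC_real); ring.
rewrite varpiE [in LHS]split_theta /varpi_offset /varpi_coef.
rewrite mulrDr raddfD mulrDr addrACA.
congr (_ + _).
rewrite mulr_sumr raddf_sum mulr_sumr -big_split; apply: eq_bigr => i _.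
rewrite mulr_sumr raddf_sum mulr_sumr -big_split; apply: eq_bigr => j _.
exact: split_pair.
Qed.

Lemma bcd_arg_coef (Q : 'M[C]_N) : bcd_arg Q m n = varpi_coef (upd_entry Q m n 0).
Proof.
have shift i j : (beta i j)%:C%C * Dmat i j Q m n
    = (beta i j)%:C%C * Dmat i j (upd_entry Q m n 0) m n
      + c * Q m n * ((beta i j)%:C%C * chi i j m n).
  have := Dmat_upd_entry Q i j (Q m n); rewrite {1}upd_entry_id => DQ.
  by rewrite {1}DQ; ring.
have sum_shift :
    \sum_(i < I) \sum_(j < I | (i < j)%N) (beta i j)%:C%C * Dmat i j Q m n
    = \sum_(i < I) \sum_(j < I | (i < j)%N)
        (beta i j)%:C%C * Dmat i j (upd_entry Q m n 0) m n
      + c * Q m n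
        * \sum_(i < I) \sum_(j < I | (i < j)%N) (beta i j)%:C%C * chi i j m n.
  rewrite mulr_sumr -big_split; apply: eq_bigr => i _.
  by rewrite mulr_sumr -big_split; apply: eq_bigr => j _.
by rewrite bcd_argE sum_shift addrAC addrK.
Qed.

End BlockCoordinateUpdate.

Local Open Scope complex_scope.

Theorem proposition4 (R : realType) (N M L I : nat)
  (hN : (0 < N)%N) (hM : (0 < M)%N) (hL : (0 < L)%N) (hI : (0 < I)%N)
  (sigma2 rho : R) (hsigma : 0 < sigma2) (hrho : 0 < rho)
  (alpha : 'I_I -> R[i]) (G : 'I_I -> 'M[R[i]]_(N, M)) (a : 'I_I -> 'cV[R[i]]_N)
  (beta : 'I_I -> 'I_I -> R)
  (hbeta : forall i j : 'I_I, (i < j)%N -> 0 <= beta i j)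
  (x : 'cV[R[i]]_M) (theta : 'cV[R[i]]_N)
  (Q : 'M[R[i]]_N) (hQ : unimod Q) (m n : 'I_N) (t : R)
  (ht : bcd_arg L sigma2 rho alpha G a beta x theta Q m n
        = `|bcd_arg L sigma2 rho alpha G a beta x theta Q m n| * expj t) :
  unimod (upd_entry Q m n (expj t)) /\
  forall Q' : 'M[R[i]]_N, unimod Q' ->
    (forall p q, (p != m) || (q != n) -> Q' p q = Q p q) ->
    varpi L sigma2 rho alpha G a beta x theta Q'
      <= varpi L sigma2 rho alpha G a beta x theta (upd_entry Q m n (expj t)).
Proof.
(* The expansion of [varpi] is exact, so no positivity hypothesis is needed. *)
have unit_e := norm_expj t.
split=> [|Q' unit_Q' agree]; first exact: unimod_upd_entry hQ unit_e.
rewrite (eq_upd_entry agree) !varpi_upd_entry ?unit_e ?unit_Q' //.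
rewrite lerD2l ler_pM2l ?ltr0n // -bcd_arg_coef.
exact: Re_conjM_le_phase unit_e ht (unit_Q' m n).
Qed.
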